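(* For every natural number $n$, $$\Phi^*_n(x)=\prod_{\substack{d\mid n\\ \kappa(d)=\kappa(n)}}\Phi_d(x).$$ Equivalently, $\Phi^*_n(x)=\prod_{d\mid n/\kappa(n)}\Phi_{\kappa(n)}(x^d)$.
   Context: $\Phi_d(x)=\prod_{1\le j\le d,\ \gcd(j,d)=1}(x-\zeta_d^j)$ is the $d$-th cyclotomic polynomial, $\zeta_d=e^{2\pi i/d}$. A divisor $d$ of $n$ is unitary, $d\mid\mid n$, if $\gcd(d,n/d)=1$; $(j,n)_*=\max\{d: d\mid j,\ d\mid\mid n\}$; the unitary cyclotomic polynomial is $\Phi^*_n(x)=\prod_{1\le j\le n,\ (j,n)_*=1}(x-\zeta_n^j)$. $\kappa(n)=\prod_{p\mid n}p$ denotes the squarefree kernel of $n$ (with $\kappa(1)=1$). *)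

From HB Require Import structures.
From mathcomp Require Import all_boot all_order all_algebra all_field.
Set Implicit Arguments. Unset Strict Implicit. Unset Printing Implicit Defensive.
Import Order.TTheory GRing.Theory Num.Theory.

Definition kappa (n : nat) : nat := \prod_(p <- primes n) p.

Definition unitary_dvd (d n : nat) : bool := (d %| n) && coprime d (n %/ d).

Definition ugcd (j n : nat) : nat :=
  \max_(d <- divisors n | unitary_dvd d n && (d %| j)) d.

Local Open Scope ring_scope.

(* Phi_d(x) = prod_{1<=j<=d, gcd(j,d)=1} (x - zeta_d^j), with zeta : nat -> algC
   a family of roots of unity (zeta d intended primitive d-th root). *)
Definition cycl (zeta : nat -> algC) (d : nat) : {poly algC} :=
  \prod_(1 <= j < d.+1 | coprime j d) ('X - (zeta d ^+ j)%:P).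

Definition ucycl (zeta : nat -> algC) (n : nat) : {poly algC} :=
  \prod_(1 <= j < n.+1 | ugcd j n == 1%N) ('X - (zeta n ^+ j)%:P).

From HB Require Import structures.
From mathcomp Require Import all_boot all_order all_algebra all_field.

Set Implicit Arguments.
Unset Strict Implicit.
Unset Printing Implicit Defensive.

Import Order.TTheory GRing.Theory Num.Theory.

(* For a primitive n-th root z, the root z^j has order n/gcd(j,n), and (j,n)_* = 1
   exactly when no full prime power part n`_p of n divides j, i.e. when n/gcd(j,n)
   has the same prime divisors as n.  Grouping the roots of Phi*_n by their order
   therefore gives the product of the Phi_d over the divisors d of n with
   kappa(d) = kappa(n).  These d are the kappa(n) e with e | n/kappa(n); as every
   prime of e divides kappa(n), the residues mod kappa(n) e coprime to it are the
   j + kappa(n) i with j coprime to kappa(n), and factoring x^e - z^(je) over the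
   e-th roots of unity yields Phi_kappa(n)(x^e) = Phi_(kappa(n) e)(x). *)

Lemma big_nat1_period (R : Type) (idx : R) (op : Monoid.com_law idx)
    (P : pred nat) (F : nat -> R) n :
  P n = P 0 -> F n = F 0 ->
  \big[op/idx]_(1 <= j < n.+1 | P j) F j = \big[op/idx]_(j < n | P j) F j.
Proof.
case: n => [|n] Pn Fn; first by rewrite big_geq // big_ord0.
rewrite big_add1 /= big_mkord big_mkcond [RHS]big_mkcond.
rewrite big_ord_recr big_ord_recl /= Pn Fn Monoid.mulmC.
by congr (op _ _); apply: eq_bigr => i _; rewrite /bump.
Qed.

Lemma big_coprime_divmod (R : Type) (idx : R) (op : Monoid.com_law idx)
    k d (G : nat -> R) :
  \big[op/idx]_(0 <= j < k | coprime j k) \big[op/idx]_(0 <= i < d) G (j + k * i)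
    = \big[op/idx]_(0 <= m < k * d | coprime m k) G m.
Proof.
elim: d => [|d IHd]; first by rewrite muln0 [RHS]big_geq // big1 // => j _; rewrite big_geq.
under eq_bigr => j _ do rewrite big_nat_recr //=.
rewrite big_split /= IHd mulnS addnC [RHS](@big_cat_nat _ _ _ (k * d)) ?leq_addr //=.
congr (op _ _); rewrite -[in RHS](add0n (k * d)) big_addn add0n addKn.
by apply: eq_bigl => j; rewrite -[RHS]coprime_modl addnC mulnC modnMDl coprime_modl.
Qed.

Lemma eqn_div_gcdMl q k d : 0 < q -> 0 < d ->
  (q * d %/ gcdn (q * k) (q * d) == d) = coprime k d.
Proof.
move=> q_gt0 d_gt0; have g_gt0 : 0 < gcdn k d by rewrite gcdn_gt0 d_gt0 orbT.
rewrite -muln_gcdr divnMl // eq_sym eqn_div ?dvdn_gcdr //.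
by rewrite -[X in _ == X]muln1 eqn_pmul2l.
Qed.

Lemma coprimeMr_pnat m k d : 0 < k -> \pi(k).-nat d -> coprime m (k * d) = coprime m k.
Proof.
move=> k_gt0 d_nat; rewrite coprimeMr; case co_mk: (coprime m k) => //=.
have d_gt0 : 0 < d by case/andP: d_nat.
have g_gt0 : 0 < gcdn m d by rewrite gcdn_gt0 d_gt0 orbT.
apply/eqP/(@pnat_1 \pi(k)); first exact: pnat_dvd (dvdn_gcdr m d) d_nat.
by rewrite -coprime_pi' // coprime_sym (coprime_dvdl (dvdn_gcdl m d)).
Qed.

Lemma prime_dvd_kappa p n : prime p -> (p %| kappa n) = (p \in primes n).
Proof.
move=> p_pr; rewrite /kappa Euclid_dvd_prod // big_has.
apply/hasP/idP => [[q q_n] | p_n]; last by exists p.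
have q_pr : prime q by move: q_n; rewrite mem_primes => /andP[].
by rewrite dvdn_prime2 // => /eqP->.
Qed.

Lemma kappa_gt0 n : 0 < kappa n.
Proof.
by rewrite /kappa big_seq; apply: prodn_cond_gt0 => p /(allP (all_prime_primes n))/prime_gt0.
Qed.

Lemma primes_kappa n : primes (kappa n) = primes n.
Proof.
apply/eq_primes => p; rewrite mem_primes kappa_gt0 /=.
by case p_pr: (prime p); [rewrite prime_dvd_kappa | rewrite mem_primes p_pr].
Qed.

Lemma eqn_kappa m n : (kappa m == kappa n) = (primes m == primes n).
Proof.
apply/eqP/eqP => [eq_k | eq_p]; last by rewrite /kappa eq_p.
by rewrite -[primes m]primes_kappa eq_k primes_kappa.
Qed.

Lemma kappa_dvdn n : kappa n %| n.
Proof.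
have [-> // | n_gt0] := posnP n.
rewrite {2}(prod_prime_decomp n_gt0) prime_decompE big_map /kappa big_seq [X in _ %| X]big_seq.
apply: (big_ind2 (fun a b => a %| b)) => // [*|p p_n]; first exact: dvdn_mul.
by rewrite -{1}(expn1 p) dvdn_exp2l // logn_gt0.
Qed.

Lemma unitary_dvd_p_part p n : unitary_dvd n`_p n.
Proof.
rewrite /unitary_dvd dvdn_part; have [-> | n_gt0] := posnP n; first by rewrite partn0.
by rewrite -{2}(partnC p n_gt0) mulKn ?part_gt0 // coprime_partC.
Qed.

Lemma p_part_dvdn_unitary p d n : 0 < n -> unitary_dvd d n -> p %| d -> n`_p %| d.
Proof.
move=> n_gt0 /andP[d_n d_co] p_d.
have d_gt0 : 0 < d := dvdn_gt0 n_gt0 d_n.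
have nd_gt0 : 0 < n %/ d by rewrite divn_gt0 // dvdn_leq.
have p'nd : p \notin \pi(n %/ d).
  apply/negP; rewrite /= mem_primes => /and3P[p_pr _ p_nd].
  by have := coprime_dvdl p_d d_co; rewrite prime_coprime // p_nd.
have -> : n = d * (n %/ d) by rewrite mulnC divnK.
by rewrite partnM // (eqP (etrans (p_part_eq1 _ _) p'nd)) muln1 dvdn_part.
Qed.

Lemma ugcd_eq1 j n : 0 < n ->
  (ugcd j n == 1) = all (fun p : nat => ~~ (n`_p %| j)) (primes n).
Proof.
move=> n_gt0; have one_le : 1 <= ugcd j n.
  apply: (@leq_bigmax_seq _ _ _ id 1 (divisor1 n)).
  by rewrite /unitary_dvd dvd1n coprime1n dvd1n.
rewrite eqn_leq one_le andbT; apply/bigmax_leqP_seq/allP => [small p p_n | no_part d].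
  apply/negP => np_j; have := small _ _ (introT andP (conj (unitary_dvd_p_part p n) np_j)).
  by rewrite -dvdn_divisors ?dvdn_part // leqNgt p_part_gt1 => /(_ isT)/negP.
rewrite -dvdn_divisors // => d_n /andP[d_unit d_j]; rewrite leqNgt; apply/negP => d_gt1.
have p_n : pdiv d \in primes n.
  by rewrite mem_primes pdiv_prime // n_gt0 (dvdn_trans (pdiv_dvd d)).
have := no_part _ p_n; rewrite (dvdn_trans _ d_j) //.
exact: p_part_dvdn_unitary (pdiv_dvd d).
Qed.

Lemma p_part_dvdn_gcd p j n : prime p -> 0 < n ->
  (n`_p %| j) = (p \notin primes (n %/ gcdn j n)).
Proof.
move=> p_pr n_gt0; have g_gt0 : 0 < gcdn j n by rewrite gcdn_gt0 n_gt0 orbT.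
rewrite -(andbT (_ %| j)) -(dvdn_part p n) -dvdn_gcd p_part pfactor_dvdn //.
by rewrite -logn_gt0 logn_div ?dvdn_gcdr // subn_gt0 -leqNgt.
Qed.

Lemma ugcd_eq1_kappa j n : 0 < n -> (ugcd j n == 1) = (kappa (n %/ gcdn j n) == kappa n).
Proof.
move=> n_gt0; rewrite ugcd_eq1 // eqn_kappa.
have sub_n : {subset primes (n %/ gcdn j n) <= primes n}.
  move=> p; rewrite !mem_primes n_gt0 => /and3P[-> _ /dvdn_trans]; apply.
  exact/dvdn_div/dvdn_gcdr.
rewrite (eq_in_all (a2 := mem (primes (n %/ gcdn j n)))) => [|p]; last first.
  by rewrite mem_primes => /andP[p_pr _]; rewrite p_part_dvdn_gcd ?negbK.
apply/allP/eqP => [n_sub | ->] //; apply/eq_primes => p.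
by apply/idP/idP => [/sub_n | /n_sub].
Qed.

Lemma perm_divisors_kappa n : 0 < n ->
  perm_eq [seq e <- divisors n | kappa e == kappa n]
          [seq kappa n * d | d <- divisors (n %/ kappa n)].
Proof.
move=> n_gt0; set K := kappa n; have K_gt0 : 0 < K := kappa_gt0 n.
have K_n : K %| n := kappa_dvdn n.
have nK_gt0 : 0 < n %/ K by rewrite divn_gt0 // dvdn_leq.
apply: uniq_perm; first exact/filter_uniq/divisors_uniq.
  by rewrite map_inj_uniq ?divisors_uniq // => a b /eqP; rewrite eqn_pmul2l // => /eqP.
move=> e; rewrite mem_filter -dvdn_divisors //; apply/andP/mapP => [[/eqP kappa_e e_n] | [d]].
  have K_e : K %| e by rewrite -kappa_e kappa_dvdn.
  exists (e %/ K); last by rewrite mulnC divnK.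
  by rewrite -dvdn_divisors // -(dvdn_pmul2l K_gt0) !(mulnC K) !divnK.
rewrite -dvdn_divisors // => d_nK ->.
have d_gt0 : 0 < d := dvdn_gt0 nK_gt0 d_nK.
have Kd_n : K * d %| n by rewrite -(divnK K_n) mulnC dvdn_pmul2r.
split=> //; rewrite eqn_kappa; apply/eqP/eq_primes => p.
rewrite primesM // primes_kappa; apply/orP/idP => [[// | ] | ]; last by left.
rewrite !mem_primes n_gt0 d_gt0 => /and3P[-> _ p_d].
by rewrite (dvdn_trans p_d (dvdn_trans d_nK (dvdn_div K_n))).
Qed.

Lemma pnat_kappa_dvdn d n : 0 < n -> d %| n -> \pi(kappa n).-nat d.
Proof.
move=> n_gt0 d_n; rewrite (eq_pnat _ (_ : \pi(kappa n) =i \pi(n))) => [|p].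
  exact: pnat_dvd d_n (pnat_pi n_gt0).
by rewrite !inE /= primes_kappa.
Qed.

Local Open Scope ring_scope.

Lemma factor_Xn_subC (F : fieldType) d (w c : F) : d.-primitive_root w -> c != 0 ->
  \prod_(0 <= i < d) ('X - (c * w ^+ i)%:P) = 'X^d - (c ^+ d)%:P.
Proof.
move=> prim_w c_neq0.
rewrite (eq_bigr (fun i => c *: (('X - (w ^+ i)%:P) \Po (c^-1 *: 'X)))) => [|i _]; last first.
  by rewrite comp_polyB comp_polyX comp_polyC scalerBr scalerA mulfV // scale1r scale_polyC.
rewrite scaler_prod prodr_const_nat subn0 -rmorph_prod /= (factor_Xn_sub_1 prim_w).
rewrite comp_polyB comp_polyC rmorphXn /= comp_polyX exprZn scalerBr scalerA -exprMn.
by rewrite mulfV // expr1n scale1r scale_polyC mulr1.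
Qed.

Lemma cyclotomic_nat (R : nzRingType) (z : R) n :
  cyclotomic z n = \prod_(0 <= k < n | coprime k n) ('X - (z ^+ k)%:P).
Proof. by rewrite big_mkord. Qed.

Lemma prod_XsubC_order_eq (R : comNzRingType) n (z : R) d :
    n.-primitive_root z -> (d %| n)%N ->
  \prod_(k < n | (n %/ gcdn k n == d)%N) ('X - (z ^+ k)%:P) = cyclotomic (z ^+ (n %/ d)) d.
Proof.
move=> prim_z d_n; have n_gt0 := prim_order_gt0 prim_z.
set q := (n %/ d)%N; have def_n : n = (q * d)%N by rewrite divnK.
have [q_gt0 d_gt0] : (0 < q /\ 0 < d)%N by apply/andP; rewrite -muln_gt0 -def_n.
have mulq_lt (k : 'I_d) : (q * k < n)%N by rewrite def_n ltn_pmul2l.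
have divq_lt (k : 'I_n) : (k %/ q < d)%N by rewrite ltn_divLR // mulnC -def_n.
rewrite (reindex (fun k : 'I_d => Ordinal (mulq_lt k))) /=; last first.
  exists (fun k : 'I_n => Ordinal (divq_lt k)) => [k _ | k].
    by apply: val_inj; rewrite /= mulKn.
  rewrite inE => /eqP k_fiber; apply: val_inj; rewrite /= mulnC divnK //.
  have g_n : (gcdn k n %| n)%N := dvdn_gcdr k n.
  suff -> : q = gcdn k n by apply: dvdn_gcdl.
  by apply/esym/eqP; rewrite eqn_div // -k_fiber mulnC divnK.
rewrite /cyclotomic; apply: eq_big => k; first by rewrite {1 2}def_n eqn_div_gcdMl.
by rewrite exprM.
Qed.

Lemma prod_XsubC_order_filter (R : comNzRingType) n (z : R) (Q : pred nat) :
    n.-primitive_root z ->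
  \prod_(k < n | Q (n %/ gcdn k n)%N) ('X - (z ^+ k)%:P)
    = \prod_(d <- divisors n | Q d) cyclotomic (z ^+ (n %/ d)) d.
Proof.
move=> prim_z; have n_gt0 := prim_order_gt0 prim_z.
rewrite [RHS]big_seq_cond.
under eq_bigr => d /andP[d_n _] do rewrite -prod_XsubC_order_eq ?dvdn_divisors //.
rewrite -big_seq_cond (exchange_big_dep predT) //= [LHS]big_mkcond; apply: eq_bigr => k _.
have k_n : (n %/ gcdn k n)%N \in divisors n by rewrite -dvdn_divisors ?dvdn_div ?dvdn_gcdr.
rewrite (eq_bigl (fun d => pred1 (n %/ gcdn k n)%N d && Q d)) => [|d]; last first.
  by rewrite andbC eq_sym.
by rewrite -big_filter_cond filter_pred1_uniq ?divisors_uniq // big_cons big_nil mulr1.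
Qed.

Lemma cyclotomic_comp_Xn (F : fieldType) k d (u : F) :
    (k * d).-primitive_root u -> \pi(k).-nat d ->
  cyclotomic (u ^+ d) k \Po 'X^d = cyclotomic u (k * d).
Proof.
move=> prim_u d_nat; have := prim_order_gt0 prim_u; rewrite muln_gt0 => /andP[k_gt0 d_gt0].
have prim_uk : d.-primitive_root (u ^+ k).
  by have := dvdn_prim_root prim_u (dvdn_mull k (dvdnn d)); rewrite mulnK.
have u_neq0 : u != 0 by rewrite (prim_root_eq0 prim_u) -lt0n muln_gt0 k_gt0.
rewrite !cyclotomic_nat rmorph_prod /=.
under eq_bigr => j _ do rewrite comp_polyB comp_polyX comp_polyC -exprM mulnC exprM
  -(factor_Xn_subC prim_uk) ?expf_neq0 //.
under eq_bigr => j _ do under eq_bigr => i _ do rewrite -exprM -exprD.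
rewrite (big_coprime_divmod _ k d (fun m => 'X - (u ^+ m)%:P)).
by apply: eq_bigl => m; rewrite coprimeMr_pnat.
Qed.

Lemma cycl_cyclotomic (zeta : nat -> algC) d w :
  d.-primitive_root (zeta d) -> d.-primitive_root w -> cycl zeta d = cyclotomic w d.
Proof.
move=> prim_zd prim_w; rewrite -(Cintr_Cyclotomic prim_w) (Cintr_Cyclotomic prim_zd).
rewrite /cycl big_nat1_period ?expr0 ?prim_expr_order //.
by rewrite /coprime gcdnn gcd0n.
Qed.

Lemma cycl_comp_Xn (zeta : nat -> algC) k d :
    k.-primitive_root (zeta k) -> (k * d).-primitive_root (zeta (k * d)%N) ->
    \pi(k).-nat d ->
  cycl zeta k \Po 'X^d = cycl zeta (k * d).
Proof.
move=> prim_k prim_kd d_nat; have prim_kd_d := dvdn_prim_root prim_kd (dvdn_mulr d (dvdnn k)).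
rewrite mulKn ?(prim_order_gt0 prim_k) // in prim_kd_d.
rewrite (cycl_cyclotomic prim_k prim_kd_d) (cycl_cyclotomic prim_kd prim_kd).
exact: cyclotomic_comp_Xn.
Qed.

Lemma ucycl_kappa (zeta : nat -> algC) n : n.-primitive_root (zeta n) ->
  ucycl zeta n = \prod_(k < n | kappa (n %/ gcdn k n) == kappa n) ('X - (zeta n ^+ k)%:P).
Proof.
move=> prim_z; have n_gt0 := prim_order_gt0 prim_z.
rewrite /ucycl (eq_bigl _ _ (fun j => ugcd_eq1_kappa j n_gt0)) big_nat1_period //.
  by rewrite gcdnn gcd0n.
by rewrite prim_expr_order ?expr0.
Qed.

Theorem theorem3p1 (zeta : nat -> algC)
  (hzeta : forall d : nat, (0 < d)%N -> d.-primitive_root (zeta d))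
  (n : nat) (hn : (0 < n)%N) :
  ucycl zeta n = \prod_(d <- divisors n | kappa d == kappa n) cycl zeta d
  /\ ucycl zeta n = \prod_(d <- divisors (n %/ kappa n)) (cycl zeta (kappa n) \Po 'X^d).
Proof.
have prim_zn := hzeta n hn.
have ucycl_div : ucycl zeta n = \prod_(d <- divisors n | kappa d == kappa n) cycl zeta d.
  rewrite ucycl_kappa // (prod_XsubC_order_filter (fun d => kappa d == kappa n) prim_zn).
  rewrite big_seq_cond [RHS]big_seq_cond; apply: eq_bigr => d /andP[d_n _].
  rewrite -dvdn_divisors // in d_n.
  by rewrite (cycl_cyclotomic (hzeta d (dvdn_gt0 hn d_n)) (dvdn_prim_root prim_zn d_n)).
split=> //; rewrite ucycl_div -big_filter (perm_big _ (perm_divisors_kappa hn)) big_map.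
have K_gt0 := kappa_gt0 n; have K_n := kappa_dvdn n.
have nK_gt0 : (0 < n %/ kappa n)%N by rewrite divn_gt0 // dvdn_leq.
apply: eq_big_seq => d; rewrite -dvdn_divisors // => d_nK.
have d_n : (d %| n)%N := dvdn_trans d_nK (dvdn_div K_n).
by rewrite cycl_comp_Xn ?pnat_kappa_dvdn // hzeta // muln_gt0 K_gt0 (dvdn_gt0 nK_gt0 d_nK).
Qed.
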